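(* Let $P=\{\mathbf{x}^{(\mathrm{p})}_i\}_{i=1}^{n_{\mathrm p}}$ and $U=\{\mathbf{x}^{(\mathrm{u})}_i\}_{i=1}^{n_{\mathrm u}}$ be finite sets of points in $\mathbb{R}^d$, let $\pi\in(0,1)$, $w_{\mathrm p}=\pi/n_{\mathrm p}$ and $w_{\mathrm u}=1/n_{\mathrm u}$. Let $P'\subseteq P$ and $U'\subseteq U$, not both empty. For a loss $\ell:\mathbb{R}\times\{-1,+1\}\to\mathbb{R}$ define $$\hat R_{\mathrm{nnPU}}(v;P',U')=\sum_{\mathbf{x}\in P'}w_{\mathrm p}\,\ell(v,+1)+\max\Bigl\{0,\ \sum_{\mathbf{x}\in U'}w_{\mathrm u}\,\ell(v,-1)-\sum_{\mathbf{x}\in P'}w_{\mathrm p}\,\ell(v,-1)\Bigr\},$$ and $\hat R^*_{\mathrm{nnPU}}(P',U')=\inf_{v\in\mathbb{R}}\hat R_{\mathrm{nnPU}}(v;P',U')$. Let $W_{\mathrm p}=|P'|w_{\mathrm p}$, $W_{\mathrm n}=|U'|w_{\mathrm u}-|P'|w_{\mathrm p}$, and $v^*=\frac{W_{\mathrm p}}{W_{\mathrm p}+W_{\mathrm n}}$, where $v^*=+\infty$ if $W_{\mathrm p}+W_{\mathrm n}=0$. (a) For the quadratic loss $\ell(v,y)=(1-vy)^2$: $$\hat R^*_{\mathrm{nnPU}}(P',U')=\begin{cases}0,& v^*>1,\\ 4(W_{\mathrm p}+W_{\mathrm n})\,v^*(1-v^* ),&\text{otherwise.}\end{cases}$$ (b)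 For the logistic loss $\ell(v,y)=\ln(1+\exp(-vy))$: $$\hat R^*_{\mathrm{nnPU}}(P',U')=\begin{cases}(W_{\mathrm p}+W_{\mathrm n})\bigl(-v^*\ln v^*-(1-v^* )\ln(1-v^* )\bigr),& 0<v^*<1,\\ 0,&\text{otherwise.}\end{cases}$$
   Context: This is the non-negative PU (nnPU) risk estimate restricted to a decision-tree node containing positive examples $P'$ and unlabeled examples $U'$, when a constant score $v$ is predicted at that node. The value $v^*=+\infty$ counts as $v^*>1$. *)

From HB Require Import structures.
From mathcomp Require Import all_boot all_order all_algebra.
From mathcomp Require Import all_classical all_reals all_analysis.
Set Implicit Arguments. Unset Strict Implicit. Unset Printing Implicit Defensive.
Import Order.TTheory GRing.Theory Num.Theory.
Local Open Scope ring_scope.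
Local Open Scope classical_set_scope.

(* Losses l(v, y), with the label y in {-1,+1} encoded as a real (1 or -1). *)
Definition quad_loss (R : realType) (v y : R) : R := (1 - v * y) ^+ 2.
Definition logistic_loss (R : realType) (v y : R) : R := ln (1 + expR (- (v * y))).

Definition nnPU_risk (R : realType) (loss : R -> R -> R) (pi : R)
  (np nu : nat) (P' : {set 'I_np}) (U' : {set 'I_nu}) (v : R) : R :=
  let wp := pi / np%:R in let wu := 1 / nu%:R in
  \sum_(i in P') wp * loss v 1
  + Num.max 0 (\sum_(i in U') wu * loss v (-1) - \sum_(i in P') wp * loss v (-1)).

Definition nnPU_opt (R : realType) (loss : R -> R -> R) (pi : R)
  (np nu : nat) (P' : {set 'I_np}) (U' : {set 'I_nu}) : R :=
  inf [set nnPU_risk loss pi P' U' v | v in [set: R]].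

Definition Wp (R : realType) (pi : R) (np : nat) (P' : {set 'I_np}) : R :=
  #|P'|%:R * (pi / np%:R).
Definition Wn (R : realType) (pi : R) (np nu : nat)
  (P' : {set 'I_np}) (U' : {set 'I_nu}) : R :=
  #|U'|%:R * (1 / nu%:R) - #|P'|%:R * (pi / np%:R).

Definition vstar (R : realType) (pi : R) (np nu : nat)
  (P' : {set 'I_np}) (U' : {set 'I_nu}) : \bar R :=
  let s := Wp pi P' + Wn pi P' U' in
  if s == 0 then +oo%E else (Wp pi P' / s)%:E.

From HB Require Import structures.
From mathcomp Require Import all_boot all_order all_algebra.
From mathcomp Require Import all_classical all_reals all_analysis.
From mathcomp Require Import ring lra.
Set Implicit Arguments. Unset Strict Implicit. Unset Printing Implicit Defensive.
Import Order.TTheory GRing.Theory Num.Theory.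
Local Open Scope ring_scope.
Local Open Scope classical_set_scope.

(* Write a := W_p and b := W_n, so that the risk at v is
   a l(v,+1) + max(0, b l(v,-1)).  If b <= 0 the max vanishes and a l(v,+1)
   can be made arbitrarily small (v = 1 for the quadratic loss, v -> +oo for
   the logistic one); for the logistic loss the same happens when a = 0, now
   letting v -> -oo.  Otherwise the risk is a l(v,+1) + b l(v,-1).  For the
   quadratic loss, completing the square gives the minimum 4ab/(a+b) at
   v = (a-b)/(a+b).  For the logistic loss, with q = sigmoid v the risk is the
   cross entropy -a ln q - b ln(1-q), minimised at q = a/(a+b) by Gibbs'
   inequality.  It remains to express both values through v* = a/(a+b). *)

Section Logarithm.
Variable R : realType.
Implicit Types x : R.

Lemma ln_le_subr1 x : 0 < x -> ln x <= x - 1.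
Proof.
move=> x_gt0; have := @le_ln1Dx R (x - 1).
by rewrite addrCA subrr addr0; apply; lra.
Qed.

Definition softplus x := ln (1 + expR x).
Definition sigmoid x := (1 + expR (- x))^-1.

Lemma softplus_ge0 x : 0 <= softplus x.
Proof. by rewrite ln_ge0 // lerDl expR_ge0. Qed.

Lemma softplus_le x : softplus x <= expR x.
Proof. by rewrite le_ln1Dx // (lt_le_trans (ltrN10 R)) ?expR_ge0. Qed.

Lemma sigmoid_gt0 x : 0 < sigmoid x.
Proof. by rewrite invr_gt0 ltr_wpDr ?expR_ge0. Qed.

Lemma sigmoid_lt1 x : sigmoid x < 1.
Proof. by rewrite invf_lt1 ?ltrDl ?expR_gt0 // ltr_wpDr ?expR_ge0. Qed.

Lemma softplusN x : softplus (- x) = - ln (sigmoid x).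
Proof. by rewrite /softplus lnV ?opprK // posrE ltr_wpDr ?expR_ge0. Qed.

Lemma softplus_sigmoid x : softplus x = - ln (1 - sigmoid x).
Proof.
have ex_gt0 := expR_gt0 x.
have -> : 1 - sigmoid x = (1 + expR x)^-1.
  by rewrite /sigmoid expRN; field; rewrite ?gt_eqF // ltr_wpDl.
by rewrite /softplus lnV ?opprK // posrE ltr_wpDr ?expR_ge0.
Qed.

Lemma sigmoid_ln_ratio (a b : R) : 0 < a -> 0 < b ->
  sigmoid (ln (a / b)) = a / (a + b).
Proof.
move=> a_gt0 b_gt0; rewrite /sigmoid expRN lnK ?posrE ?divr_gt0 //.
by field; rewrite !gt_eqF ?addr_gt0.
Qed.

Lemma mul_softplus_small (c e : R) : 0 <= c -> 0 < e ->
  exists v, c * softplus v < e.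
Proof.
move=> c_ge0 e_gt0; have d_gt0 : 0 < e / (c + 1) by rewrite divr_gt0 //; lra.
exists (ln (e / (c + 1))).
apply: (le_lt_trans (ler_wpM2l c_ge0 (softplus_le _))).
rewrite lnK ?posrE //.
have -> : c * (e / (c + 1)) = e - e / (c + 1) by field; lra.
lra.
Qed.

Lemma binary_gibbs (a b q : R) : 0 < a -> 0 < b -> 0 < q < 1 ->
  - a * ln (a / (a + b)) - b * ln (b / (a + b)) <= - a * ln q - b * ln (1 - q).
Proof.
move=> a_gt0 b_gt0 /andP[q_gt0 q_lt1]; have s_gt0 : 0 < a + b by lra.
have gibbs_term x y : 0 < x -> 0 < y ->
    x * (ln y - ln (x / (a + b))) <= y * (a + b) - x.
  move=> x_gt0 y_gt0; have p_gt0 : 0 < x / (a + b) by rewrite divr_gt0.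
  rewrite -ln_div ?posrE //.
  have := ler_wpM2l (ltW x_gt0) (ln_le_subr1 (divr_gt0 y_gt0 p_gt0)).
  suff -> : x * (y / (x / (a + b)) - 1) = y * (a + b) - x by [].
  by field; rewrite !gt_eqF.
have := gibbs_term a q a_gt0 q_gt0; have := gibbs_term b (1 - q) b_gt0.
rewrite subr_gt0 => /(_ q_lt1); lra.
Qed.

End Logarithm.

Section RiskInfima.
Variable R : realType.

Lemma inf_range_eq (f : R -> R) (m : R) :
  (forall v, m <= f v) -> (forall e, 0 < e -> exists v, f v < m + e) ->
  inf (range f) = m.
Proof.
move=> f_ge approx; apply/le_anti/andP; split; last first.
  by apply: lb_le_inf => [|_ [v _ <-]]; [exists (f 0), 0 | exact: f_ge].
apply/ler_addgt0Pr => e /approx [v fv_lt]; apply: le_trans (ltW fv_lt).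
by apply: ge_inf; [exists m => _ [w _ <-]; exact: f_ge | exists v].
Qed.

Lemma quad_range_inf (a b : R) : 0 <= a ->
  inf (range (fun v => a * (1 - v) ^+ 2 + Num.max 0 (b * (1 + v) ^+ 2))) =
  if 0 < b then 4 * a * b / (a + b) else 0.
Proof.
move=> a_ge0; have [b_le0|b_gt0] := lerP b 0.
  have fE v : a * (1 - v) ^+ 2 + Num.max 0 (b * (1 + v) ^+ 2) = a * (1 - v) ^+ 2.
    by rewrite max_l ?addr0 // mulr_le0_ge0 ?sqr_ge0.
  apply: inf_range_eq => [v|e e_gt0]; first by rewrite fE mulr_ge0 ?sqr_ge0.
  by exists 1; rewrite fE subrr expr0n mulr0 add0r.
have s_gt0 : 0 < a + b by lra.
have fE v : a * (1 - v) ^+ 2 + Num.max 0 (b * (1 + v) ^+ 2)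
    = 4 * a * b / (a + b) + ((a + b) * v - (a - b)) ^+ 2 / (a + b).
  by rewrite max_r ?(mulr_ge0 (ltW b_gt0) (sqr_ge0 _)) //; field; rewrite gt_eqF.
apply: inf_range_eq => [v|e e_gt0].
  by rewrite fE lerDl divr_ge0 ?sqr_ge0 ?ltW.
exists ((a - b) / (a + b)); rewrite fE [(a + b) * _]mulrC divfK ?gt_eqF // subrr.
by rewrite expr0n mul0r addr0 ltrDl.
Qed.

Lemma logistic_range_inf (a b : R) : 0 <= a ->
  inf (range (fun v => a * softplus (- v) + Num.max 0 (b * softplus v))) =
  if (0 < a) && (0 < b) then - a * ln (a / (a + b)) - b * ln (b / (a + b))
  else 0.
Proof.
move=> a_ge0; case: ifPn => [/andP[a_gt0 b_gt0] | degenerate].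
  have fE v : a * softplus (- v) + Num.max 0 (b * softplus v)
      = - a * ln (sigmoid v) - b * ln (1 - sigmoid v).
    rewrite max_r ?mulr_ge0 ?softplus_ge0 ?ltW // softplusN softplus_sigmoid.
    by rewrite !mulrN mulNr.
  apply: inf_range_eq => [v|e e_gt0].
    by rewrite fE binary_gibbs ?sigmoid_gt0 ?sigmoid_lt1.
  exists (ln (a / b)); rewrite fE sigmoid_ln_ratio //.
  have -> : 1 - a / (a + b) = b / (a + b) by field; rewrite gt_eqF ?addr_gt0.
  by rewrite ltrDl.
apply: inf_range_eq => [v|e e_gt0].
  by rewrite addr_ge0 ?mulr_ge0 ?softplus_ge0 ?le_max ?lexx.
have [b_le0|b_gt0] := lerP b 0.
  have [v av_lt] := mul_softplus_small a_ge0 e_gt0; exists (- v).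
  by rewrite opprK max_l ?addr0 ?add0r // mulr_le0_ge0 ?softplus_ge0.
have a0 : a = 0.
  by apply/le_anti; move: degenerate; rewrite b_gt0 andbT -leNgt => ->.
have [v bv_lt] := mul_softplus_small (ltW b_gt0) e_gt0; exists v.
by rewrite a0 mul0r !add0r max_r // mulr_ge0 ?softplus_ge0 ?ltW.
Qed.

End RiskInfima.

Section Risk.
Variables (R : realType) (pi : R) (np nu : nat).
Variables (P' : {set 'I_np}) (U' : {set 'I_nu}).

Lemma nnPU_riskE (loss : R -> R -> R) v :
  nnPU_risk loss pi P' U' v =
  Wp pi P' * loss v 1 + Num.max 0 (Wn pi P' U' * loss v (-1)).
Proof. by rewrite /nnPU_risk /Wn /Wp !sumr_const mulrBl -!mulrA !mulr_natl. Qed.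

Lemma nnPU_risk_quad : nnPU_risk (@quad_loss R) pi P' U' =
  fun v => Wp pi P' * (1 - v) ^+ 2 + Num.max 0 (Wn pi P' U' * (1 + v) ^+ 2).
Proof. by apply/funext => v; rewrite nnPU_riskE /quad_loss mulr1 mulrN1 opprK. Qed.

Lemma nnPU_risk_logistic : nnPU_risk (@logistic_loss R) pi P' U' =
  fun v => Wp pi P' * softplus (- v) + Num.max 0 (Wn pi P' U' * softplus v).
Proof.
by apply/funext => v; rewrite nnPU_riskE /logistic_loss mulr1 mulrN1 opprK.
Qed.

Lemma Wp_ge0 : 0 <= pi -> 0 <= Wp pi P'.
Proof. by move=> pi_ge0; rewrite mulr_ge0 ?divr_ge0. Qed.

Lemma Wp_add_Wn_ge0 : 0 <= Wp pi P' + Wn pi P' U'.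
Proof. by rewrite /Wn addrC subrK mulr_ge0 ?divr_ge0. Qed.

End Risk.

Definition vstar_of (R : realType) (a b : R) : \bar R :=
  if a + b == 0 then +oo%E else (a / (a + b))%:E.

Lemma vstarE (R : realType) (pi : R) np nu
    (P' : {set 'I_np}) (U' : {set 'I_nu}) :
  vstar pi P' U' = vstar_of (Wp pi P') (Wn pi P' U').
Proof. by []. Qed.

Section VstarValues.
Variables (R : realType) (a b : R).
Local Notation vs := (vstar_of a b).

Lemma quad_opt_vstar : 0 <= a -> 0 <= a + b ->
  (if (1%:E < vs)%E then 0 else 4 * (a + b) * fine vs * (1 - fine vs)) =
  if 0 < b then 4 * a * b / (a + b) else 0.
Proof.
move=> a_ge0 ab_ge0; rewrite /vstar_of; have [s0|s_neq0] := eqVneq (a + b) 0.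
  by rewrite ltry ltNge (_ : b <= 0) //; lra.
have s_gt0 : 0 < a + b by rewrite lt_neqAle eq_sym s_neq0.
have -> : 1 - a / (a + b) = b / (a + b) by field.
rewrite lte_fin ltr_pdivlMr // mul1r gtrDl /=.
case: ltrgtP => // [b_gt0|->]; first by field.
by rewrite mul0r mulr0.
Qed.

Lemma logistic_opt_vstar : 0 <= a -> 0 <= a + b ->
  (if (0%:E < vs)%E && (vs < 1%:E)%E then
     (a + b) * (- fine vs * ln (fine vs) - (1 - fine vs) * ln (1 - fine vs))
   else 0) =
  if (0 < a) && (0 < b) then - a * ln (a / (a + b)) - b * ln (b / (a + b))
  else 0.
Proof.
move=> a_ge0 ab_ge0; rewrite /vstar_of; have [s0|s_neq0] := eqVneq (a + b) 0.
  by rewrite [(+oo < _)%E]ltNge leey andbF; case: ifP => // /andP[]; lra.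
have s_gt0 : 0 < a + b by rewrite lt_neqAle eq_sym s_neq0.
have -> : 1 - a / (a + b) = b / (a + b) by field.
rewrite !lte_fin pmulr_lgt0 ?invr_gt0 // ltr_pdivrMr // mul1r ltrDl /=.
by case: ifP => // _; field.
Qed.

End VstarValues.

Theorem proposition2 (R : realType) (d np nu : nat)
  (xp : 'I_np -> 'rV[R]_d) (xu : 'I_nu -> 'rV[R]_d)
  (xp_inj : injective xp) (xu_inj : injective xu)
  (pi : R) (hpi0 : 0 < pi) (hpi1 : pi < 1)
  (P' : {set 'I_np}) (U' : {set 'I_nu})
  (hne : P' != finset.set0 \/ U' != finset.set0) :
  let W := Wp pi P' + Wn pi P' U' in
  let vs := vstar pi P' U' in
  (nnPU_opt (@quad_loss R) pi P' U' =
     if (1%:E < vs)%E then 0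
     else 4 * W * fine vs * (1 - fine vs))
  /\
  (nnPU_opt (@logistic_loss R) pi P' U' =
     if (0%:E < vs)%E && (vs < 1%:E)%E then
       W * (- fine vs * ln (fine vs) - (1 - fine vs) * ln (1 - fine vs))
     else 0).
Proof.
move=> W vs; rewrite {}/W {}/vs vstarE.
have a_ge0 := Wp_ge0 P' (ltW hpi0).
have s_ge0 := Wp_add_Wn_ge0 pi P' U'.
rewrite quad_opt_vstar ?logistic_opt_vstar // /nnPU_opt.
by rewrite nnPU_risk_quad nnPU_risk_logistic quad_range_inf ?logistic_range_inf.
Qed.
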